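(* Let $A \in \mathbb{R}^{m \times r}$, $B \in \mathbb{R}^{r \times n}$, and $S \subseteq \mathbb{R}^n$. The following are equivalent: (i) $\ker(A_\kappa B_\lambda) \cap S = \emptyset$ for all $\kappa \in \mathbb{R}^r_+$ and $\lambda\in \mathbb{R}^n_+$; (ii) $\sigma(\ker(A)) \cap \sigma(B(\Sigma(S))) = \emptyset$.
   Context: $\mathbb{R}_+$ denotes the strictly positive reals. $A_\kappa = A\,\mathrm{diag}(\kappa)$, $B_\lambda = B\,\mathrm{diag}(\lambda)$. For $x\in\mathbb{R}^n$, $\sigma(x)\in\{-,0,+\}^n$ is the componentwise sign vector; for $T\subseteq\mathbb{R}^n$, $\sigma(T)=\{\sigma(x)\mid x\in T\}$ and $\Sigma(T)=\sigma^{-1}(\sigma(T))=\{\lambda\circ x\mid \lambda\in\mathbb{R}^n_+, x\in T\}$, where $\circ$ is the componentwise product. $B(T)=\{Bx\mid x\in T\}$. *)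

(* the statement is purely algebraic/order-theoretic over the
   reals, so we state it over an arbitrary real field R (e.g. the reals). *)
From HB Require Import structures.
From mathcomp Require Import all_boot all_order all_algebra.
Set Implicit Arguments. Unset Strict Implicit. Unset Printing Implicit Defensive.
Import Order.TTheory GRing.Theory Num.Theory.
Local Open Scope ring_scope.

Definition posvec (R : realFieldType) (n : nat) (v : 'cV[R]_n) : Prop :=
  forall i : 'I_n, 0 < v i 0.

(* M_v = M diag(v) *)
Definition scale_cols (R : realFieldType) (m n : nat)
  (M : 'M[R]_(m, n)) (v : 'cV[R]_n) : 'M[R]_(m, n) :=
  M *m diag_mx v^T.

Definition hadamard (R : realFieldType) (n : nat) (u v : 'cV[R]_n) : 'cV[R]_n :=
  \col_i (u i 0 * v i 0).

Definition signvec (R : realFieldType) (n : nat) (x : 'cV[R]_n) : 'cV[R]_n :=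
  map_mx Num.sg x.

Definition kerset (R : realFieldType) (m n : nat) (M : 'M[R]_(m, n))
  : 'cV[R]_n -> Prop := fun x => M *m x = 0.

Definition sigma_set (R : realFieldType) (n : nat) (T : 'cV[R]_n -> Prop)
  : 'cV[R]_n -> Prop := fun s => exists x, T x /\ signvec x = s.

Definition Sigma_set (R : realFieldType) (n : nat) (T : 'cV[R]_n -> Prop)
  : 'cV[R]_n -> Prop :=
  fun y => exists lam x, posvec lam /\ T x /\ y = hadamard lam x.

Definition image_set (R : realFieldType) (m n : nat) (B : 'M[R]_(m, n))
  (T : 'cV[R]_n -> Prop) : 'cV[R]_m -> Prop :=
  fun y => exists x, T x /\ y = B *m x.

(* Write z := B (lambda o x) for x in S and lambda > 0; these are
   exactly the elements of B(Sigma(S)).  Since A_kappa B_lambda x = A (kappa o z),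
   condition (i) fails iff some kappa o z with kappa > 0 lies in ker A.
   Positive rescaling preserves sign vectors, and conversely two vectors with
   the same sign vector differ by a positive rescaling (take kappa_i = u_i/z_i
   where z_i <> 0 and kappa_i = 1 elsewhere).  Hence "kappa o z in ker A for some
   kappa > 0" is equivalent to "sigma(z) in sigma(ker A)", which is the failure
   of condition (ii). *)

From HB Require Import structures.
From mathcomp Require Import all_boot all_order all_algebra.
Import Order.TTheory GRing.Theory Num.Theory.
Local Open Scope ring_scope.

Lemma scale_cols_mul {R : realFieldType} {m n : nat}
    (M : 'M[R]_(m, n)) (v x : 'cV[R]_n) :
  scale_cols M v *m x = M *m hadamard v x.
Proof.
rewrite /scale_cols -mulmxA mul_diag_mx; congr (_ *m _).
by apply/matrixP => i j; rewrite !mxE (ord1 j).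
Qed.

Lemma signvec_hadamard_pos {R : realFieldType} {n : nat} (k z : 'cV[R]_n) :
  posvec k -> signvec (hadamard k z) = signvec z.
Proof.
move=> k_pos; apply/matrixP => i j; rewrite !mxE (ord1 j).
by rewrite sgrM gtr0_sg ?mul1r.
Qed.

Lemma same_signvec_rescale {R : realFieldType} {n : nat} {u z : 'cV[R]_n} :
  signvec u = signvec z -> exists2 k, posvec k & hadamard k z = u.
Proof.
move=> eq_sg.
have sg_i i : Num.sg (u i 0) = Num.sg (z i 0).
  by have := congr1 (fun M : 'cV[R]_n => M i 0) eq_sg; rewrite !mxE.
exists (\col_i (if z i 0 == 0 then 1 else u i 0 / z i 0)).
- move=> i; rewrite mxE; case: eqP => [//|/eqP z_neq0].
  have := sg_i i; case: (ltrgtP (z i 0) 0) => [z_lt0|z_gt0|z_eq0].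
  + rewrite (ltr0_sg z_lt0) => /eqP; rewrite sgr_cp0 => u_lt0.
    by rewrite -mulrNN -invrN divr_gt0 // oppr_gt0.
  + rewrite (gtr0_sg z_gt0) => /eqP; rewrite sgr_cp0 => u_gt0.
    by rewrite divr_gt0.
  + by rewrite z_eq0 eqxx in z_neq0.
- apply/matrixP => i j; rewrite !mxE (ord1 j); case: eqP => [z_eq0|/eqP z_neq0].
  + have /eqP := sg_i i; rewrite z_eq0 sgr0 sgr_eq0 => /eqP ->.
    by rewrite mulr0.
  + by rewrite mulrAC -mulrA divff // mulr1.
Qed.

Lemma signvec_in_sigma_ker {R : realFieldType} {m n : nat}
    (A : 'M[R]_(m, n)) (z : 'cV[R]_n) :
  sigma_set (kerset A) (signvec z) <->
  exists2 k, posvec k & kerset A (hadamard k z).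
Proof.
split.
- move=> [u [Au sg_u]].
  have [k k_pos kz_eq_u] := same_signvec_rescale sg_u.
  by exists k => //; rewrite kz_eq_u.
- by move=> [k k_pos Akz]; exists (hadamard k z); rewrite signvec_hadamard_pos.
Qed.

Theorem mainTheorem4 (R : realFieldType) (m r n : nat)
  (A : 'M[R]_(m, r)) (B : 'M[R]_(r, n)) (S : 'cV[R]_n -> Prop) :
  (forall (kappa : 'cV[R]_r) (lambda : 'cV[R]_n),
     posvec kappa -> posvec lambda ->
     ~ (exists x, kerset (scale_cols A kappa *m scale_cols B lambda) x /\ S x))
  <->
  ~ (exists s, sigma_set (kerset A) s /\
               sigma_set (image_set B (Sigma_set S)) s).
Proof.
have ker_scaled kappa lambda x :
  kerset (scale_cols A kappa *m scale_cols B lambda) x <->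
  kerset A (hadamard kappa (B *m hadamard lambda x)).
  by rewrite /kerset -mulmxA !scale_cols_mul.
split.
- move=> no_ker [s [ker_s [z [[y [[lambda [x [lambda_pos [Sx ->]]]] ->]] sg_z]]]].
  rewrite -sg_z in ker_s.
  have [kappa kappa_pos Akz] := (signvec_in_sigma_ker A _).1 ker_s.
  by apply: (no_ker kappa lambda kappa_pos lambda_pos); exists x; split => //;
     apply/ker_scaled.
- move=> no_sign kappa lambda kappa_pos lambda_pos [x [/ker_scaled Akz Sx]].
  apply: no_sign; exists (signvec (B *m hadamard lambda x)); split.
  + by apply/signvec_in_sigma_ker; exists kappa.
  + exists (B *m hadamard lambda x); split => //.
    by exists (hadamard lambda x); split => //; exists lambda, x.
Qed.
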